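(* Let $\overline{D}$ be a program. If $\Theta;\Omega;\Gamma\vdash e:T\dashv\Gamma'$ and $\Gamma\vdash h$, then either $e$ is a value or there exist $h',e'$ such that $\langle h,e\rangle\longrightarrow\langle h',e'\rangle$.
   Context: Core object-oriented calculus with typestates (''usages''). Syntax. A program $\overline{D}$ is a list of declarations $D ::= \mathsf{class}\ C\{\mathcal{U},\overline{F},\overline{M}\} \mid \mathsf{enum}\ L\{\overline{l}\}$; $F ::= \mathsf{val}\ f:t$; $M ::= \mathsf{fun}\ m(x:t):t'\{e\}$. Declared types $t ::= C \mid \mathsf{void}\mid\mathsf{bool}\mid L$. Expressions: $r ::= o \mid o.f \mid x$; $e ::= o.f = e \mid o.f=\mathsf{new}\ C \mid e;e \mid r.m(e) \mid \mathsf{unit} \mid o.f \mid x \mid \mathsf{if}\ e\ \mathsf{then}\ e\ \mathsf{else}\ e \mid o.l \mid \mathsf{match}(e)\{\overline{l:e}\} \mid \mathsf{null}\mid\mathsf{true}\mid\mathsf{false}\mid k:e \mid \mathsf{continue}\ k$, with $o$ object references (including $\mathsf{this}$), $x$ parameters, $k$ loop labels. Values $v$ are $\mathsf{unit},\mathsf{true},\mathsf{false},\mathsf{null}$, object references $o$ and enumeration constants $o.l$. Run-time types $T ::= o[C,\mathcal{U}] \mid \mathsf{void}\mid \bot \mid \mathsf{bool}\mid L \mid L\ \mathsf{link}\ o$. Usages $\mathcal{U} ::= \mu X.\mathcal{U} \mid X \mid \{m_i;w_i\}_{i\in I} \mid \mathsf{end}$, $w ::= \langle l_i:\mathcal{U}_i\rangle_{i\in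 I} \mid \mathcal{U}$, with LTS $\{m_i;w_i\}_{i\in I}\xrightarrow{m_j} w_j$, $\langle l_i:\mathcal{U}_i\rangle_{i\in I}\xrightarrow{l_j}\mathcal{U}_j$ ($j\in I$), and $\mu X.\mathcal{U}\xrightarrow{\alpha}\mathcal{U}'$ whenever $\mathcal{U}[\mu X.\mathcal{U}/X]\xrightarrow{\alpha}\mathcal{U}'$. Expressions and method bodies are assumed well-formed (no expression follows a $\mathsf{continue}$ after unfolding, no free loop labels, $\mathsf{continue}$ and recursive calls guarded by $\mathsf{if}$/$\mathsf{match}$, each labelled expression has a branch not ending in $\mathsf{continue}$). Typing environments. $\Gamma ::= \emptyset \mid \Gamma, o\mapsto (o[C,\mathcal{U}],\lambda)$ (one binding per $o$), $\lambda$ a finite map from fields to $z ::= \mathsf{basetype}\ b \mid \mathsf{reference}\ o$ with $b\in\{\mathsf{bool},\mathsf{void},\bot,L\}$. Accessors $.\mathsf{class},.\mathsf{usage},.\mathsf{type},.\mathsf{fields}$, $.f$; updates $\Gamma[o\mapsto(T,\lambda)]$, $\Gamma[o.f\mapsto z]$, $\Gamma[o.\mathsf{usage}\mapsto\mathcal{U}]$. $\overline{F}.\mathsf{inittypes}$ maps class-typed fields to $\mathsf{basetype}\ \bot$ and base-typed fields to $\mathsf{basetype}$ of their type. $\mathsf{agree}$ holds exactly for $(C,\bot)$, $(C,o[C,\mathcal{U}])$, $(\mathsf{bool},\mathsf{bool})$, $(\mathsf{void},\mathsf{void})$, $(L,L)$; $\mathsf{returns}(t,T)$ iff $\mathsf{agree}(t,T)$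 or ($t=L$, $T=L\ \mathsf{link}\ o$). $\mathsf{getType}(\mathsf{reference}\ o,\Gamma)=\Gamma(o).\mathsf{type}$, $\mathsf{getType}(\mathsf{basetype}\ b,\Gamma)=b$; $\mathsf{vtype}(o[C,\mathcal{U}])=\mathsf{reference}\ o$, $\mathsf{vtype}(b)=\mathsf{basetype}\ b$; $\mathsf{getValue}(T)$ is an unspecified value of type $T$. Typing judgement $\Theta;\Omega;\Gamma\vdash e:T\dashv\Gamma'$ ($\Theta$: method instances $o.m$ to environments; $\Omega$: labels to environments), rules: (Assign) $e:T$ from $\Gamma$ to $\Gamma'$, field $\mathsf{var}\ f:t$ of $\Gamma'(o).\mathsf{class}$, $\mathsf{agree}(t,T)$ give $o.f=e:\mathsf{void}\dashv\Gamma'[o.f\mapsto\mathsf{vtype}(T)]$. (Field) $o.f:\mathsf{getType}(\Gamma(o).\mathsf{fields}(f),\Gamma)\dashv\Gamma$. (New) for $o'$ fresh, $\overline{D}(C)=\mathsf{class}\ C\{\mathcal{U},\overline{F},\overline{M}\}$, $\mathsf{val}\ f:C$ a field of the class of $o$: $o.f=\mathsf{new}\ C:\mathsf{void}\dashv(\Gamma,o'\mapsto(o'[C,\mathcal{U}],\overline{F}.\mathsf{inittypes}))[o.f\mapsto\mathsf{reference}\ o']$. (Unit) $\mathsf{unit}:\mathsf{void}$, (Bool) $\mathsf{true},\mathsf{false}:\mathsf{bool}$, (Null) $\mathsf{null}:\bot$, (Enum) $o.l:L\ \mathsf{link}\ o$ for $l\in L$, (Const) $o.l:L$ for $l\in L$,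 (Obj) $o:o[C,\mathcal{U}]$ if $\Gamma(o)=(o[C,\mathcal{U}],\lambda)$; these leave $\Gamma$ unchanged. (Call-d) if $\Theta;\Omega;\Gamma\vdash e:T\dashv\Gamma''$, $\Gamma''(o)=(o[C,\mathcal{U}],\lambda)$, $\mathcal{U}\xrightarrow{m}\mathcal{U}'$, $\mathsf{fun}\ m(x:t):t'\{e'\}$ a method of $C$, $\mathsf{agree}(t,T)$, $\Gamma'''=\Gamma''[o\mapsto(o[C,\mathcal{U}'],\lambda)]$, $(\Theta,o.m\mapsto\Gamma''');\Omega;\Gamma'''\vdash e'[o/\mathsf{this}][\mathsf{getValue}(T')/x]:T'\dashv\Gamma'$, $\mathsf{returns}(t',T')$, then $\Theta;\Omega;\Gamma\vdash o.m(e):T'\dashv\Gamma'$. (Call-d-rec) if $(\Theta,o.m\mapsto\Gamma'');\Omega;\Gamma\vdash e:T\dashv\Gamma'''$, $\Gamma'''(o)=(o[C,\mathcal{U}],\lambda)$, $\mathcal{U}\xrightarrow{m}\mathcal{U}'$, $\mathsf{agree}(t,T)$, $\Gamma''=\Gamma'''[o\mapsto(o[C,\mathcal{U}'],\lambda)]$, then $(\Theta,o.m\mapsto\Gamma'');\Omega;\Gamma\vdash o.m(e):T'\dashv\Gamma'$ for any $T',\Gamma'$. (Call-ind), (Call-ind-rec): the same for $o.f.m(e)$ with the object $o'$ where $\Gamma''(o).f=\mathsf{reference}\ o'$, binding $o'.m$ and $\mathsf{this}:=o'$. (If) $e_1:\mathsf{bool}$ from $\Gamma$ to $\Gamma''$,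 and $e_2:T$, $e_3:T$ both from $\Gamma''$ to $\Gamma'$. (Comp) sequential threading of environments, type of the second expression. (Label) $\Theta;\Omega,k\mapsto\Gamma;\Gamma\vdash e:T\dashv\Gamma'$ gives $\Theta;\Omega;\Gamma\vdash k:e:T\dashv\Gamma'$. (Continue) if $\Omega(k)=\Gamma$ then $\Theta;\Omega;\Gamma\vdash\mathsf{continue}\ k:T\dashv\Gamma'$ for any $T,\Gamma'$. (Case) if $e:L\ \mathsf{link}\ o$ from $\Gamma$ to $\Gamma''$, and for every $l_i\in L$, $\Gamma''(o).\mathsf{usage}\xrightarrow{l_i}\mathcal{U}_i$ and $e_i:T$ from $\Gamma''[o.\mathsf{usage}\mapsto\mathcal{U}_i]$ to $\Gamma'$, then $\mathsf{match}(e)\{\overline{l:e}\}:T\dashv\Gamma'$. Semantics. Heaps $h$ map object references to (class, field map to values). Contexts $\mathcal{E} ::= [\_] \mid o.f=\mathcal{E}\mid \mathcal{E};e\mid o.m(\mathcal{E})\mid o.f.m(\mathcal{E})\mid \mathsf{if}\ \mathcal{E}\ \mathsf{then}\ e\ \mathsf{else}\ e\mid\mathsf{match}(\mathcal{E})\{\overline{l:e}\}$. Reductions $\langle h,e\rangle\longrightarrow\langle h',e'\rangle$: (ctx) reduce inside $\mathcal{E}$; (assign) $\langle h,o.f=v\rangle\to\langle h[o.f\mapsto v],\mathsf{unit}\rangle$; (seq) $\langle h,v;e\rangle\to\langle h,e\rangle$; (if-true/false) select branch; (lab) $\langle h,k:e\rangle\to\langle h,e[k:e/\mathsf{continue}\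 k]\rangle$; (match) $\langle h,\mathsf{match}(o.l_j)\{\overline{l:e}\}\rangle\to\langle h,e_j\rangle$; (call-d) $\langle h,o.m(v)\rangle\to\langle h,e[o/\mathsf{this}][v/x]\rangle$ if $\mathsf{fun}\ m(x:t):t'\{e\}$ is a method of $h(o).\mathsf{class}$; (call-ind) $\langle h,o.f.m(v)\rangle\to\langle h,e[o'/\mathsf{this}][v/x]\rangle$ if $h(o).f=o'$ and $m$ with body $e$ is a method of $h(o').\mathsf{class}$; (new) $\langle h,o.f=\mathsf{new}\ C\rangle\to\langle (h,o'\mapsto(C,\overline{F}.\mathsf{initvals}))[o.f\mapsto o'],\mathsf{unit}\rangle$ for fresh $o'$ ($\mathsf{initvals}$: class fields $\mathsf{null}$, $\mathsf{bool}$ $\mathsf{false}$, $\mathsf{void}$ $\mathsf{unit}$, $L$ its first constant); (fld) $\langle h,o.f\rangle\to\langle h,h(o).\mathsf{fields}(f)\rangle$. Heap consistency $\Gamma\vdash h$: $\mathrm{dom}(h)=\mathrm{dom}(\Gamma)$ and each $h(o)$ agrees with $\Gamma(o)$ on class and field bindings. *)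

From Stdlib Require Import String List Arith.
Import ListNotations.
Open Scope string_scope.

Definition cname := string.
Definition ename := string.
Definition fname := string.
Definition mname := string.
Definition lname := string.
Definition vname := string.
Definition uvar  := nat.
Definition klabel := nat.
Definition objref := nat.

(* Usages   U ::= mu X.U | X | {m_i ; w_i} | end ,  w ::= <l_i : U_i> | U *)
Inductive usage : Type :=
| UMu : uvar -> usage -> usage
| UVar : uvar -> usage
| UBranch : list (mname * wusage) -> usage
| UEnd : usage
with wusage : Type :=
| WChoice : list (lname * usage) -> wusage
| WU : usage -> wusage.

Fixpoint usubst (U : usage) (X : uvar) (S : usage) {struct U} : usage :=
  match U with
  | UMu Y U' => if Nat.eqb X Y then UMu Y U' else UMu Y (usubst U' X S)
  | UVar Y => if Nat.eqb X Y then S else UVar Y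
  | UBranch ms =>
      UBranch ((fix go (l : list (mname * wusage)) :=
                  match l with
                  | [] => []
                  | (m, w) :: l' => (m, wsubst w X S) :: go l'
                  end) ms)
  | UEnd => UEnd
  end
with wsubst (w : wusage) (X : uvar) (S : usage) {struct w} : wusage :=
  match w with
  | WChoice ls =>
      WChoice ((fix go (l : list (lname * usage)) :=
                  match l with
                  | [] => []
                  | (lb, U) :: l' => (lb, usubst U X S) :: go l'
                  end) ls)
  | WU U => WU (usubst U X S)
  end.

Inductive action : Type :=
| AM : mname -> action
| AL : lname -> action.

Inductive wstep : wusage -> action -> wusage -> Prop :=
| ws_meth : forall ms m w,
    In (m, w) ms -> wstep (WU (UBranch ms)) (AM m) w
| ws_lab : forall ls l U,
    In (l, U) ls -> wstep (WChoice ls) (AL l) (WU U)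
| ws_mu : forall X U a w',
    wstep (WU (usubst U X (UMu X U))) a w' -> wstep (WU (UMu X U)) a w'.

Inductive oref : Type :=
| OThis : oref
| OId : objref -> oref.

Inductive recv : Type :=
| RObj : oref -> recv
| RFld : oref -> fname -> recv
| RVar : vname -> recv.

Inductive expr : Type :=
| EAssign : oref -> fname -> expr -> expr
| ENew : oref -> fname -> cname -> expr          (* o.f = new C *)
| ESeq : expr -> expr -> expr
| ECall : recv -> mname -> expr -> expr
| EUnit : expr
| EField : oref -> fname -> expr
| EVar : vname -> expr
| EIf : expr -> expr -> expr -> expr
| EEnum : oref -> lname -> expr
| EMatch : expr -> list (lname * expr) -> expr
| ENull : expr
| ETrue : expr
| EFalse : expr
| ELabel : klabel -> expr -> expr
| EContinue : klabel -> expr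
| EObj : oref -> expr.

Inductive is_value : expr -> Prop :=
| v_unit : is_value EUnit
| v_true : is_value ETrue
| v_false : is_value EFalse
| v_null : is_value ENull
| v_obj : forall o, is_value (EObj o)
| v_enum : forall o l, is_value (EEnum o l).

Definition ors (o : objref) (p : oref) : oref :=
  match p with OThis => OId o | OId n => OId n end.

Definition rs (o : objref) (r : recv) : recv :=
  match r with
  | RObj p => RObj (ors o p)
  | RFld p f => RFld (ors o p) f
  | RVar x => RVar x
  end.

Fixpoint subst_this (o : objref) (e : expr) : expr :=
  match e with
  | EAssign p f e1 => EAssign (ors o p) f (subst_this o e1)
  | ENew p f C => ENew (ors o p) f C
  | ESeq e1 e2 => ESeq (subst_this o e1) (subst_this o e2)
  | ECall r m e1 => ECall (rs o r) m (subst_this o e1)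
  | EUnit => EUnit
  | EField p f => EField (ors o p) f
  | EVar x => EVar x
  | EIf e1 e2 e3 => EIf (subst_this o e1) (subst_this o e2) (subst_this o e3)
  | EEnum p l => EEnum (ors o p) l
  | EMatch e1 bs =>
      EMatch (subst_this o e1)
        ((fix go (l : list (lname * expr)) :=
            match l with
            | [] => []
            | (lb, b) :: l' => (lb, subst_this o b) :: go l'
            end) bs)
  | ENull => ENull
  | ETrue => ETrue
  | EFalse => EFalse
  | ELabel k e1 => ELabel k (subst_this o e1)
  | EContinue k => EContinue k
  | EObj p => EObj (ors o p)
  end.

Definition rv (x : vname) (v : expr) (r : recv) : recv :=
  match r with
  | RVar y =>
      if String.eqb x y then
        match v with EObj p => RObj p | _ => RVar y end
      else RVar y
  | r' => r'
  end.

Fixpoint subst_var (x : vname) (v : expr) (e : expr) : expr :=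
  match e with
  | EAssign p f e1 => EAssign p f (subst_var x v e1)
  | ENew p f C => ENew p f C
  | ESeq e1 e2 => ESeq (subst_var x v e1) (subst_var x v e2)
  | ECall r m e1 => ECall (rv x v r) m (subst_var x v e1)
  | EUnit => EUnit
  | EField p f => EField p f
  | EVar y => if String.eqb x y then v else EVar y
  | EIf e1 e2 e3 => EIf (subst_var x v e1) (subst_var x v e2) (subst_var x v e3)
  | EEnum p l => EEnum p l
  | EMatch e1 bs =>
      EMatch (subst_var x v e1)
        ((fix go (l : list (lname * expr)) :=
            match l with
            | [] => []
            | (lb, b) :: l' => (lb, subst_var x v b) :: go l'
            end) bs)
  | ENull => ENull
  | ETrue => ETrue
  | EFalse => EFalse
  | ELabel k e1 => ELabel k (subst_var x v e1)
  | EContinue k => EContinue k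
  | EObj p => EObj p
  end.

Fixpoint subst_cont (k : klabel) (s : expr) (e : expr) : expr :=
  match e with
  | EAssign p f e1 => EAssign p f (subst_cont k s e1)
  | ENew p f C => ENew p f C
  | ESeq e1 e2 => ESeq (subst_cont k s e1) (subst_cont k s e2)
  | ECall r m e1 => ECall r m (subst_cont k s e1)
  | EUnit => EUnit
  | EField p f => EField p f
  | EVar y => EVar y
  | EIf e1 e2 e3 => EIf (subst_cont k s e1) (subst_cont k s e2) (subst_cont k s e3)
  | EEnum p l => EEnum p l
  | EMatch e1 bs =>
      EMatch (subst_cont k s e1)
        ((fix go (l : list (lname * expr)) :=
            match l with
            | [] => []
            | (lb, b) :: l' => (lb, subst_cont k s b) :: go l'
            end) bs)
  | ENull => ENull
  | ETrue => ETrue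
  | EFalse => EFalse
  | ELabel k' e1 => if Nat.eqb k k' then ELabel k' e1 else ELabel k' (subst_cont k s e1)
  | EContinue k' => if Nat.eqb k k' then s else EContinue k'
  | EObj p => EObj p
  end.

Fixpoint labels_closed (bound : list klabel) (e : expr) : Prop :=
  match e with
  | EAssign _ _ e1 => labels_closed bound e1
  | ESeq e1 e2 => labels_closed bound e1 /\ labels_closed bound e2
  | ECall _ _ e1 => labels_closed bound e1
  | EIf e1 e2 e3 =>
      labels_closed bound e1 /\ labels_closed bound e2 /\ labels_closed bound e3
  | EMatch e1 bs =>
      labels_closed bound e1 /\
      (fix go (l : list (lname * expr)) : Prop :=
         match l with
         | [] => True
         | (_, b) :: l' => labels_closed bound b /\ go l'
         end) bs
  | ELabel k e1 => labels_closed (k :: bound) e1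
  | EContinue k => In k bound
  | _ => True
  end.

Definition no_free_labels (e : expr) : Prop := labels_closed [] e.

Inductive dtype : Type :=
| DTClass : cname -> dtype
| DTVoid : dtype
| DTBool : dtype
| DTEnum : ename -> dtype.

Record method : Type := Method {
  m_name : mname;
  m_param : vname;
  m_ptype : dtype;
  m_rtype : dtype;
  m_body : expr }.

Inductive decl : Type :=
| DClass : cname -> usage -> list (fname * dtype) -> list method -> decl
| DEnum : ename -> list lname -> decl.

Definition program := list decl.

Fixpoint find_class (P : program) (C : cname)
  : option (usage * list (fname * dtype) * list method) :=
  match P with
  | [] => None
  | DClass C' U F M :: P' =>
      if String.eqb C C' then Some (U, F, M) else find_class P' C
  | DEnum _ _ :: P' => find_class P' C
  end.

Fixpoint find_enum (P : program) (L : ename) : option (list lname) :=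
  match P with
  | [] => None
  | DEnum L' ls :: P' => if String.eqb L L' then Some ls else find_enum P' L
  | DClass _ _ _ _ :: P' => find_enum P' L
  end.

Fixpoint find_field (F : list (fname * dtype)) (f : fname) : option dtype :=
  match F with
  | [] => None
  | (f', t) :: F' => if String.eqb f f' then Some t else find_field F' f
  end.

Fixpoint find_method (M : list method) (m : mname) : option method :=
  match M with
  | [] => None
  | md :: M' => if String.eqb m (m_name md) then Some md else find_method M' m
  end.

Definition enum_const (P : program) (L : ename) (l : lname) : Prop :=
  exists ls, find_enum P L = Some ls /\ In l ls.

Definition class_field (P : program) (C : cname) (f : fname) (t : dtype) : Prop :=
  exists U F M, find_class P C = Some (U, F, M) /\ find_field F f = Some t.

Definition class_method (P : program) (C : cname) (m : mname) (md : method) : Prop :=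
  exists U F M, find_class P C = Some (U, F, M) /\ find_method M m = Some md.

Inductive rtype : Type :=
| TObj : objref -> cname -> wusage -> rtype
| TVoid : rtype
| TBot : rtype
| TBool : rtype
| TEnum : ename -> rtype
| TLink : ename -> oref -> rtype.

Inductive btype : Type := BBool | BVoid | BBot | BEnum : ename -> btype.

Inductive ztype : Type :=
| ZBase : btype -> ztype
| ZRef : objref -> ztype.

Definition btype_rt (b : btype) : rtype :=
  match b with BBool => TBool | BVoid => TVoid | BBot => TBot | BEnum L => TEnum L end.

Record binding : Type := Bind {
  b_class : cname;
  b_usage : wusage;
  b_fields : fname -> option ztype }.

Definition env := objref -> option binding.
Definition menv := objref -> mname -> option env.
Definition lenv := klabel -> option env.

Definition b_type (o : objref) (b : binding) : rtype := TObj o (b_class b) (b_usage b).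

Definition env_upd (G : env) (o : objref) (b : binding) : env :=
  fun o' => if Nat.eqb o' o then Some b else G o'.

Definition env_upd_field (G : env) (o : objref) (f : fname) (z : ztype) : env :=
  match G o with
  | Some b => env_upd G o (Bind (b_class b) (b_usage b)
                (fun f' => if String.eqb f' f then Some z else b_fields b f'))
  | None => G
  end.

Definition env_upd_usage (G : env) (o : objref) (w : wusage) : env :=
  match G o with
  | Some b => env_upd G o (Bind (b_class b) w (b_fields b))
  | None => G
  end.

Definition menv_upd (Th : menv) (o : objref) (m : mname) (G : env) : menv :=
  fun o' m' => if andb (Nat.eqb o' o) (String.eqb m' m) then Some G else Th o' m'.

Definition lenv_upd (Om : lenv) (k : klabel) (G : env) : lenv :=
  fun k' => if Nat.eqb k' k then Some G else Om k'.

Definition inittype (t : dtype) : ztype :=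
  match t with
  | DTClass _ => ZBase BBot
  | DTVoid => ZBase BVoid
  | DTBool => ZBase BBool
  | DTEnum L => ZBase (BEnum L)
  end.

Definition inittypes (F : list (fname * dtype)) : fname -> option ztype :=
  fun f => option_map inittype (find_field F f).

Definition agree (t : dtype) (T : rtype) : Prop :=
  match t, T with
  | DTClass _, TBot => True
  | DTClass C, TObj _ C' _ => C = C'
  | DTBool, TBool => True
  | DTVoid, TVoid => True
  | DTEnum L, TEnum L' => L = L'
  | _, _ => False
  end.

Definition returns (t : dtype) (T : rtype) : Prop :=
  agree t T \/ (exists L o, t = DTEnum L /\ T = TLink L o).

Definition getType (z : ztype) (G : env) : option rtype :=
  match z with
  | ZRef o => option_map (b_type o) (G o)
  | ZBase b => Some (btype_rt b)
  end.

Definition vtype (T : rtype) : option ztype :=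
  match T with
  | TObj o _ _ => Some (ZRef o)
  | TBool => Some (ZBase BBool)
  | TVoid => Some (ZBase BVoid)
  | TBot => Some (ZBase BBot)
  | TEnum L => Some (ZBase (BEnum L))
  | TLink _ _ => None
  end.

Fixpoint lookup_branch (bs : list (lname * expr)) (l : lname) : option expr :=
  match bs with
  | [] => None
  | (l', e) :: bs' => if String.eqb l l' then Some e else lookup_branch bs' l
  end.

(* Typing judgement  Theta; Omega; Gamma |- e : T -| Gamma'
   parameterised by the program P and the function getValue [gv]. *)
Inductive typ (P : program) (gv : rtype -> expr)
  : menv -> lenv -> env -> expr -> rtype -> env -> Prop :=
| T_Assign : forall Th Om G G' o f e T b t z,
    typ P gv Th Om G e T G' ->
    G' o = Some b ->
    class_field P (b_class b) f t ->
    agree t T ->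
    vtype T = Some z ->
    typ P gv Th Om G (EAssign (OId o) f e) TVoid (env_upd_field G' o f z)
| T_Field : forall Th Om G o f b z T,
    G o = Some b ->
    b_fields b f = Some z ->
    getType z G = Some T ->
    typ P gv Th Om G (EField (OId o) f) T G
| T_New : forall Th Om G o o' f C U F M b,
    G o' = None ->
    find_class P C = Some (U, F, M) ->
    G o = Some b ->
    class_field P (b_class b) f (DTClass C) ->
    typ P gv Th Om G (ENew (OId o) f C) TVoid
      (env_upd_field (env_upd G o' (Bind C (WU U) (inittypes F))) o f (ZRef o'))
| T_Unit : forall Th Om G, typ P gv Th Om G EUnit TVoid G
| T_True : forall Th Om G, typ P gv Th Om G ETrue TBool G
| T_False : forall Th Om G, typ P gv Th Om G EFalse TBool G
| T_Null : forall Th Om G, typ P gv Th Om G ENull TBot G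
| T_Enum : forall Th Om G o l L,
    enum_const P L l -> typ P gv Th Om G (EEnum o l) (TLink L o) G
| T_Const : forall Th Om G o l L,
    enum_const P L l -> typ P gv Th Om G (EEnum o l) (TEnum L) G
| T_Obj : forall Th Om G o b,
    G o = Some b -> typ P gv Th Om G (EObj (OId o)) (b_type o b) G
| T_CallD : forall Th Om G G' G'' o m e T b w' md T',
    typ P gv Th Om G e T G'' ->
    G'' o = Some b ->
    wstep (b_usage b) (AM m) w' ->
    class_method P (b_class b) m md ->
    agree (m_ptype md) T ->
    typ P gv (menv_upd Th o m (env_upd G'' o (Bind (b_class b) w' (b_fields b))))
      Om (env_upd G'' o (Bind (b_class b) w' (b_fields b)))
      (subst_var (m_param md) (gv T) (subst_this o (m_body md))) T' G' ->
    returns (m_rtype md) T' ->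
    typ P gv Th Om G (ECall (RObj (OId o)) m e) T' G'
| T_CallDRec : forall Th Om G G' G'' G''' o m e T b w' md T',
    Th o m = Some G'' ->
    typ P gv Th Om G e T G''' ->
    G''' o = Some b ->
    wstep (b_usage b) (AM m) w' ->
    class_method P (b_class b) m md ->
    agree (m_ptype md) T ->
    G'' = env_upd G''' o (Bind (b_class b) w' (b_fields b)) ->
    typ P gv Th Om G (ECall (RObj (OId o)) m e) T' G'
| T_CallInd : forall Th Om G G' G'' o f o' m e T b b' w' md T',
    typ P gv Th Om G e T G'' ->
    G'' o = Some b ->
    b_fields b f = Some (ZRef o') ->
    G'' o' = Some b' ->
    wstep (b_usage b') (AM m) w' ->
    class_method P (b_class b') m md ->
    agree (m_ptype md) T ->
    typ P gv (menv_upd Th o' m (env_upd G'' o' (Bind (b_class b') w' (b_fields b'))))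
      Om (env_upd G'' o' (Bind (b_class b') w' (b_fields b')))
      (subst_var (m_param md) (gv T) (subst_this o' (m_body md))) T' G' ->
    returns (m_rtype md) T' ->
    typ P gv Th Om G (ECall (RFld (OId o) f) m e) T' G'
| T_CallIndRec : forall Th Om G G' G'' G''' o f o' m e T b b' w' md T',
    Th o' m = Some G'' ->
    typ P gv Th Om G e T G''' ->
    G''' o = Some b ->
    b_fields b f = Some (ZRef o') ->
    G''' o' = Some b' ->
    wstep (b_usage b') (AM m) w' ->
    class_method P (b_class b') m md ->
    agree (m_ptype md) T ->
    G'' = env_upd G''' o' (Bind (b_class b') w' (b_fields b')) ->
    typ P gv Th Om G (ECall (RFld (OId o) f) m e) T' G'
| T_If : forall Th Om G G' G'' e1 e2 e3 T,
    typ P gv Th Om G e1 TBool G'' ->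
    typ P gv Th Om G'' e2 T G' ->
    typ P gv Th Om G'' e3 T G' ->
    typ P gv Th Om G (EIf e1 e2 e3) T G'
| T_Comp : forall Th Om G G' G'' e1 e2 T1 T2,
    typ P gv Th Om G e1 T1 G'' ->
    typ P gv Th Om G'' e2 T2 G' ->
    typ P gv Th Om G (ESeq e1 e2) T2 G'
| T_Label : forall Th Om G G' k e T,
    typ P gv Th (lenv_upd Om k G) G e T G' ->
    typ P gv Th Om G (ELabel k e) T G'
| T_Continue : forall Th Om G G' k T,
    Om k = Some G ->
    typ P gv Th Om G (EContinue k) T G'
| T_Case : forall Th Om G G' G'' e L o b bs T,
    typ P gv Th Om G e (TLink L (OId o)) G'' ->
    G'' o = Some b ->
    (forall l eb, In (l, eb) bs -> enum_const P L l) ->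
    (forall l, enum_const P L l ->
       exists U eb, wstep (b_usage b) (AL l) (WU U) /\
                    lookup_branch bs l = Some eb /\
                    typ P gv Th Om (env_upd_usage G'' o (WU U)) eb T G') ->
    typ P gv Th Om G (EMatch e bs) T G'.

Definition fieldvals := fname -> option expr.
Definition heap := objref -> option (cname * fieldvals).

Definition heap_upd_field (h : heap) (o : objref) (f : fname) (v : expr) : heap :=
  match h o with
  | Some (C, fv) =>
      fun o' => if Nat.eqb o' o
                then Some (C, fun f' => if String.eqb f' f then Some v else fv f')
                else h o'
  | None => h
  end.

Definition heap_add (h : heap) (o : objref) (c : cname * fieldvals) : heap :=
  fun o' => if Nat.eqb o' o then Some c else h o'.

Definition initval (P : program) (o' : objref) (t : dtype) : expr :=
  match t with
  | DTClass _ => ENull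
  | DTBool => EFalse
  | DTVoid => EUnit
  | DTEnum L =>
      match find_enum P L with
      | Some (l :: _) => EEnum (OId o') l
      | _ => ENull   (* unreachable for enumerations with at least one constant *)
      end
  end.

Definition initvals (P : program) (o' : objref) (F : list (fname * dtype)) : fieldvals :=
  fun f => option_map (initval P o') (find_field F f).

Inductive step (P : program) : heap -> expr -> heap -> expr -> Prop :=
| S_AssignCtx : forall h h' o f e e',
    step P h e h' e' -> step P h (EAssign o f e) h' (EAssign o f e')
| S_SeqCtx : forall h h' e1 e1' e2,
    step P h e1 h' e1' -> step P h (ESeq e1 e2) h' (ESeq e1' e2)
| S_CallDCtx : forall h h' o m e e',
    step P h e h' e' -> step P h (ECall (RObj o) m e) h' (ECall (RObj o) m e')
| S_CallIndCtx : forall h h' o f m e e',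
    step P h e h' e' -> step P h (ECall (RFld o f) m e) h' (ECall (RFld o f) m e')
| S_IfCtx : forall h h' e1 e1' e2 e3,
    step P h e1 h' e1' -> step P h (EIf e1 e2 e3) h' (EIf e1' e2 e3)
| S_MatchCtx : forall h h' e e' bs,
    step P h e h' e' -> step P h (EMatch e bs) h' (EMatch e' bs)
| S_Assign : forall h o f v c,
    is_value v -> h o = Some c ->
    step P h (EAssign (OId o) f v) (heap_upd_field h o f v) EUnit
| S_Seq : forall h v e, is_value v -> step P h (ESeq v e) h e
| S_IfTrue : forall h e2 e3, step P h (EIf ETrue e2 e3) h e2
| S_IfFalse : forall h e2 e3, step P h (EIf EFalse e2 e3) h e3
| S_Lab : forall h k e, step P h (ELabel k e) h (subst_cont k (ELabel k e) e)
| S_Match : forall h o l bs e,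
    lookup_branch bs l = Some e -> step P h (EMatch (EEnum o l) bs) h e
| S_CallD : forall h o v C fv md m,
    is_value v -> h o = Some (C, fv) -> class_method P C m md ->
    step P h (ECall (RObj (OId o)) m v) h
      (subst_var (m_param md) v (subst_this o (m_body md)))
| S_CallInd : forall h o f o' v C fv C' fv' md m,
    is_value v -> h o = Some (C, fv) -> fv f = Some (EObj (OId o')) ->
    h o' = Some (C', fv') -> class_method P C' m md ->
    step P h (ECall (RFld (OId o) f) m v) h
      (subst_var (m_param md) v (subst_this o' (m_body md)))
| S_New : forall h o o' f C U F M,
    h o' = None -> find_class P C = Some (U, F, M) ->
    step P h (ENew (OId o) f C)
      (heap_upd_field (heap_add h o' (C, initvals P o' F)) o f (EObj (OId o')))
      EUnit
| S_Fld : forall h o f C fv v,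
    h o = Some (C, fv) -> fv f = Some v ->
    step P h (EField (OId o) f) h v.

Definition value_agrees (P : program) (z : ztype) (v : expr) : Prop :=
  match z with
  | ZRef o' => v = EObj (OId o')
  | ZBase BBool => v = ETrue \/ v = EFalse
  | ZBase BVoid => v = EUnit
  | ZBase BBot => v = ENull
  | ZBase (BEnum L) => exists o l, v = EEnum o l /\ enum_const P L l
  end.

Definition heap_ok (P : program) (G : env) (h : heap) : Prop :=
  (forall o, G o = None <-> h o = None) /\
  (forall o b C fv, G o = Some b -> h o = Some (C, fv) ->
     b_class b = C /\
     forall f, match b_fields b f, fv f with
               | None, None => True
               | Some z, Some v => value_agrees P z v
               | _, _ => False
               end).

(** An expression in an
    evaluation context either steps inside the context or is a value; in the
    latter case the typing of that value fixes its shape (canonical forms) and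
    leaves the environment unchanged, so heap consistency supplies the objects,
    classes and field values that the redex needs.  A [continue k] cannot occur
    at top level because the expression has no free labels. *)

Definition reducible (P : program) (h : heap) (e : expr) : Prop :=
  exists h' e', step P h e h' e'.

Section Progress.

Variable P : program.
Variable gv : rtype -> expr.

Lemma value_typ_env_eq Th Om G v T G' :
  typ P gv Th Om G v T G' -> is_value v -> G' = G.
Proof. intros Ht Hv; destruct Hv; inversion Ht; subst; reflexivity. Qed.

Lemma bool_value_inv Th Om G v G' :
  typ P gv Th Om G v TBool G' -> is_value v -> v = ETrue \/ v = EFalse.
Proof. intros Ht Hv; destruct Hv; inversion Ht; subst; auto. Qed.

Lemma link_value_inv Th Om G v L o G' :
  typ P gv Th Om G v (TLink L (OId o)) G' -> is_value v ->
  exists l, v = EEnum (OId o) l /\ enum_const P L l.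
Proof. intros Ht Hv; destruct Hv; inversion Ht; subst; eauto. Qed.

Lemma heap_ok_fresh G h o : heap_ok P G h -> G o = None -> h o = None.
Proof. intros [Hdom _]; apply Hdom. Qed.

Lemma heap_ok_obj G h o b :
  heap_ok P G h -> G o = Some b -> exists fv, h o = Some (b_class b, fv).
Proof.
  intros [Hdom Hagree] Hb.
  destruct (h o) as [[C fv]|] eqn:Ho.
  - exists fv; destruct (Hagree o b C fv Hb Ho) as [-> _]; reflexivity.
  - apply Hdom in Ho; congruence.
Qed.

Lemma heap_ok_field G h o b f z :
  heap_ok P G h -> G o = Some b -> b_fields b f = Some z ->
  exists fv v, h o = Some (b_class b, fv) /\ fv f = Some v /\ value_agrees P z v.
Proof.
  intros Hh Hb Hz.
  destruct (heap_ok_obj _ _ _ _ Hh Hb) as [fv Ho].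
  destruct Hh as [_ Hagree].
  destruct (Hagree o b _ fv Hb Ho) as [_ Hfields].
  specialize (Hfields f); rewrite Hz in Hfields.
  destruct (fv f) as [v|] eqn:Hf; [exists fv, v; auto | contradiction].
Qed.

Lemma reducible_in_context h (K : expr -> expr) e :
  (forall h' e', step P h e h' e' -> step P h (K e) h' (K e')) ->
  (is_value e -> reducible P h (K e)) ->
  is_value e \/ (exists h' e', step P h e h' e') -> reducible P h (K e).
Proof.
  intros HK Hredex [Hv | (h' & e' & Hs)]; [auto | exists h', (K e'); auto].
Qed.

Lemma field_reducible G h o f b z :
  heap_ok P G h -> G o = Some b -> b_fields b f = Some z ->
  reducible P h (EField (OId o) f).
Proof.
  intros Hh Hb Hz.
  destruct (heap_ok_field _ _ _ _ _ _ Hh Hb Hz) as (fv & v & Ho & Hf & _).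
  eexists; eexists; eapply S_Fld; eauto.
Qed.

Lemma new_reducible G h o o' f C U F M :
  heap_ok P G h -> G o' = None -> find_class P C = Some (U, F, M) ->
  reducible P h (ENew (OId o) f C).
Proof.
  intros Hh Hfresh HC.
  eexists; eexists; eapply S_New; eauto using heap_ok_fresh.
Qed.

Section ValueArgument.

Variables (Th : menv) (Om : lenv) (G G' : env) (h : heap) (v : expr) (T : rtype).
Hypothesis Hh : heap_ok P G h.
Hypothesis Hv : is_value v.

Lemma assign_reducible o f b :
  typ P gv Th Om G v T G' -> G' o = Some b ->
  reducible P h (EAssign (OId o) f v).
Proof.
  intros Ht Hb; rewrite (value_typ_env_eq _ _ _ _ _ _ Ht Hv) in Hb.
  destruct (heap_ok_obj _ _ _ _ Hh Hb) as [fv Ho].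
  eexists; eexists; eapply S_Assign; eauto.
Qed.

Lemma call_direct_reducible o m b md :
  typ P gv Th Om G v T G' -> G' o = Some b -> class_method P (b_class b) m md ->
  reducible P h (ECall (RObj (OId o)) m v).
Proof.
  intros Ht Hb Hmd; rewrite (value_typ_env_eq _ _ _ _ _ _ Ht Hv) in Hb.
  destruct (heap_ok_obj _ _ _ _ Hh Hb) as [fv Ho].
  eexists; eexists; eapply S_CallD; eauto.
Qed.

Lemma call_indirect_reducible o f o' m b b' md :
  typ P gv Th Om G v T G' -> G' o = Some b -> b_fields b f = Some (ZRef o') ->
  G' o' = Some b' -> class_method P (b_class b') m md ->
  reducible P h (ECall (RFld (OId o) f) m v).
Proof.
  intros Ht Hb Hf Hb' Hmd.
  rewrite (value_typ_env_eq _ _ _ _ _ _ Ht Hv) in Hb, Hb'.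
  destruct (heap_ok_field _ _ _ _ _ _ Hh Hb Hf) as (fv & w & Ho & Hfv & Hw).
  destruct (heap_ok_obj _ _ _ _ Hh Hb') as [fv' Ho'].
  cbn in Hw; subst w.
  eexists; eexists; eapply S_CallInd; eauto.
Qed.

End ValueArgument.

Lemma if_reducible Th Om G G' h v e2 e3 :
  typ P gv Th Om G v TBool G' -> is_value v -> reducible P h (EIf v e2 e3).
Proof.
  intros Ht Hv; destruct (bool_value_inv _ _ _ _ _ Ht Hv) as [-> | ->];
    eexists; eexists; [apply S_IfTrue | apply S_IfFalse].
Qed.

Lemma match_reducible Th Om G G' h v L o bs :
  typ P gv Th Om G v (TLink L (OId o)) G' -> is_value v ->
  (forall l, enum_const P L l -> exists eb, lookup_branch bs l = Some eb) ->
  reducible P h (EMatch v bs).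
Proof.
  intros Ht Hv Hbranches.
  destruct (link_value_inv _ _ _ _ _ _ _ Ht Hv) as (l & -> & Hl).
  destruct (Hbranches l Hl) as [eb Heb].
  eexists; eexists; eapply S_Match, Heb.
Qed.

End Progress.

Theorem mainTheorem2 (P : program) (gv : rtype -> expr)
  (Hgv : forall T, is_value (gv T))
  (Th : menv) (Om : lenv) (G G' : env) (e : expr) (T : rtype) (h : heap) :
  no_free_labels e ->
  typ P gv Th Om G e T G' ->
  heap_ok P G h ->
  is_value e \/ exists h' e', step P h e h' e'.
Proof.
  intros Hclosed Ht; revert h Hclosed.
  induction Ht; intros h Hclosed Hh; cbn in Hclosed;
    try (left; constructor; fail); right.
  - apply reducible_in_context with (K := EAssign (OId o) f);
      eauto using step, assign_reducible.
  - eapply field_reducible; eauto.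
  - eapply new_reducible; eauto.
  - apply reducible_in_context with (K := ECall (RObj (OId o)) m);
      eauto using step, call_direct_reducible.
  - apply reducible_in_context with (K := ECall (RObj (OId o)) m);
      eauto using step, call_direct_reducible.
  - apply reducible_in_context with (K := ECall (RFld (OId o) f) m);
      eauto using step, call_indirect_reducible.
  - apply reducible_in_context with (K := ECall (RFld (OId o) f) m);
      eauto using step, call_indirect_reducible.
  - destruct Hclosed as [Hclosed _].
    apply reducible_in_context with (K := fun x => EIf x e2 e3);
      eauto using step, if_reducible.
  - destruct Hclosed as [Hclosed _].
    apply reducible_in_context with (K := fun x => ESeq x e2);
      eauto using step.
    intros Hv; exists h, e2; apply S_Seq, Hv.
  - eexists; eexists; apply S_Lab.
  - contradiction.
  - destruct Hclosed as [Hclosed _].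
    apply reducible_in_context with (K := fun x => EMatch x bs);
      eauto using step.
    intros Hv; eapply match_reducible; eauto.
    intros l Hl; destruct (H1 l Hl) as (U & eb & _ & Hbranch & _); eauto.
Qed.
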